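(* Let $(M,\rho)$ be a complete metric space and let $f,g:M\to\mathbb{R}\cup\{+\infty\}$ be proper and lower semicontinuous, with $f$ bounded below. Assume that for every $x\in\operatorname{dom}|\widetilde\nabla f|$ we have $x\in\operatorname{dom} g$ and $$|\widetilde\nabla g|(x)\le|\widetilde\nabla f|(x).$$ Then $$\inf_{x\in\operatorname{dom} f}(f(x)-g(x))\ge\inf_M f-\inf_M g.$$ In particular $\inf_M g>-\infty$, and $f(x)-\inf_M f\ge g(x)-\inf_M g$ for all $x\in M$.
   Context: $\operatorname{dom} f:=\{x:f(x)<+\infty\}$; $f$ proper if $\operatorname{dom} f\ne\varnothing$; on $\operatorname{dom} f$, $f(x)-g(x)=-\infty$ if $g(x)=+\infty$. $[t]^+:=\max\{0,t\}$ (with $[f(x)-f(y)]^+:=0$ if $f(y)=+\infty$). For $x\in\operatorname{dom} f$, the global slope is $|\widetilde\nabla f|(x):=\sup_{y\neq x}\frac{[f(x)-f(y)]^+}{\rho(x,y)}\in[0,+\infty]$, and $\operatorname{dom}|\widetilde\nabla f|:=\{x\in\operatorname{dom} f:\ |\widetilde\nabla f|(x)<+\infty\}$. *)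

From HB Require Import structures.
From mathcomp Require Import all_boot all_order all_algebra.
From mathcomp Require Import all_classical all_reals ereal.
Set Implicit Arguments. Unset Strict Implicit. Unset Printing Implicit Defensive.
Import Order.TTheory GRing.Theory Num.Theory.
Local Open Scope classical_set_scope.
Local Open Scope ring_scope.

Definition is_metric (R : realType) (M : Type) (rho : M -> M -> R) : Prop :=
  (forall x y, 0 <= rho x y) /\
  (forall x y, rho x y = 0 <-> x = y) /\
  (forall x y, rho x y = rho y x) /\
  (forall x y z, rho x z <= rho x y + rho y z).

Definition metric_complete (R : realType) (M : Type) (rho : M -> M -> R) : Prop :=
  forall u : nat -> M,
    (forall e : R, 0 < e -> exists N : nat, forall m n : nat,
        (N <= m)%N -> (N <= n)%N -> rho (u m) (u n) < e) ->
    exists x : M, forall e : R, 0 < e -> exists N : nat, forall n : nat,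
        (N <= n)%N -> rho (u n) x < e.

Local Open Scope ereal_scope.

(* f : M -> R ∪ {+oo} *)
Definition never_minfty (R : realType) (M : Type) (f : M -> \bar R) : Prop :=
  forall x, f x != -oo.

Definition dom (R : realType) (M : Type) (f : M -> \bar R) : set M :=
  [set x | f x < +oo].

Definition proper_ext (R : realType) (M : Type) (f : M -> \bar R) : Prop :=
  dom f !=set0.

Definition lsc (R : realType) (M : Type) (rho : M -> M -> R) (f : M -> \bar R) : Prop :=
  forall x (a : R), a%:E < f x ->
    exists delta : R, (0 < delta)%R /\
      forall y, (rho x y < delta)%R -> a%:E < f y.

Definition bounded_below (R : realType) (M : Type) (f : M -> \bar R) : Prop :=
  exists m : R, forall x, m%:E <= f x.

(* [t]^+ := max{0,t}; with f(x) finite and f(y) = +oo, f x - f y = -oo so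
   the positive part is 0, as in the paper's convention. *)
Definition pos_part (R : realType) (t : \bar R) : \bar R := maxe 0 t.

(* global slope |~nabla f|(x) = sup_{y <> x} [f x - f y]^+ / rho(x,y) in [0,+oo]
   (0 is included in the set so that the value lies in [0,+oo] even if M = {x}). *)
Definition global_slope (R : realType) (M : Type) (rho : M -> M -> R)
    (f : M -> \bar R) (x : M) : \bar R :=
  ereal_sup ([set 0] `|`
    [set pos_part (f x - f y) * ((rho x y)^-1)%:E | y in [set y | y <> x]]).

Definition dom_slope (R : realType) (M : Type) (rho : M -> M -> R)
    (f : M -> \bar R) : set M :=
  [set x | f x < +oo /\ global_slope rho f x < +oo].

From HB Require Import structures.
From mathcomp Require Import all_boot all_order all_algebra.
From mathcomp Require Import all_classical all_reals ereal.
From mathcomp Require Import ring lra.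
Import Order.TTheory GRing.Theory Num.Theory.
Local Open Scope classical_set_scope.
Local Open Scope ring_scope.

(* Ekeland's variational principle moves any point of dom f to a point whose
   global slope is at most a prescribed mu > 0, at the price of a drop of f of
   at least mu times the distance travelled.  Starting from x in dom |∇f| and
   applying it repeatedly with slope bounds s q^k (q < 1), we get a sequence
   w_k along which |∇g| <= |∇f| <= s q^k, so that g drops by at most 1/q times
   the drop of f, while s q^k ρ(w_k, y) becomes arbitrarily small.  Hence
   q (g x - g y) <= f x - inf f, and g x - g y <= f x - inf f as q -> 1.
   Points of dom |∇f| approximate every point of dom f from below in f
   (Ekeland again), and the lower semicontinuity of g carries the inequality
   over to all of dom f; taking infima gives the theorem. *)

Set Implicit Arguments.
Unset Strict Implicit.

Lemma dependent_choice_nat (T : Type) (P : nat -> T -> Prop)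
    (Q : nat -> T -> T -> Prop) (x0 : T) :
  P 0%N x0 -> (forall k x, P k x -> exists y, P k.+1 y /\ Q k x y) ->
  exists w : nat -> T, w 0%N = x0 /\ forall k, P k (w k) /\ Q k (w k) (w k.+1).
Proof.
move=> P0 step.
have [next Hnext] : exists next : nat -> T -> T,
    forall k x, P k x -> P k.+1 (next k x) /\ Q k x (next k x).
  have /choice[next Hnext] : forall kx : nat * T, exists y,
      P kx.1 kx.2 -> P kx.1.+1 y /\ Q kx.1 kx.2 y.
    move=> [k x]; have [/step[y Hy]|nPkx] := pselect (P k x); first by exists y.
    by exists x.
  by exists (fun k x => next (k, x)) => k x /(Hnext (k, x)).
pose w n := iteri n next x0.
have Pw k : P k (w k) by elim: k => // k IH; exact: (Hnext _ _ IH).1.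
by exists w; split=> // k; split; [exact: Pw | exact: (Hnext _ _ (Pw k)).2].
Qed.

Lemma ler_of_mul01 (R : realFieldType) (x y : R) : 0 <= y ->
  (forall r, 0 < r < 1 -> r * x <= y) -> x <= y.
Proof.
move=> y0 Hr; apply/ler_addgt0Pr => e e0; set z := y + e.
rewrite leNgt; apply/negP => zx.
have z0 : 0 < z by rewrite /z; lra.
pose r := (y + z) / (2 * z).
have rz : r * z = (y + z) / 2 by rewrite /r; field; rewrite gt_eqF.
have r01 : 0 < r < 1.
  by rewrite divr_gt0 ?mulr_gt0 ?ltr_pdivrMr ?mulr_gt0 //= /z; lra.
have : r * z < r * x by rewrite ltr_pM2l //; case/andP: r01.
have := Hr r r01; rewrite rz /z; lra.
Qed.

(* [P k + a k] decreases by at least [(1 - q) P k] at each step and stays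
   above [m], so [P] cannot stay above [e] forever. *)
Lemma dissipation_ex_le (R : realType) (P a : nat -> R) (q m e : R) :
  q < 1 -> 0 < e -> (forall k, m <= a k) ->
  (forall k, P k.+1 + a k.+1 <= q * P k + a k) -> exists k, P k <= e.
Proof.
move=> q1 e0 am dissip; apply/not_existsP => Pe.
have {}Pe k : e < P k by rewrite ltNge; apply/negP/Pe.
pose t := (1 - q) * e.
have t0 : 0 < t by rewrite mulr_gt0 // subr_gt0.
have decay k : P k + a k + k%:R * t <= P 0%N + a 0%N.
  elim: k => [|k IH]; first by rewrite mul0r addr0.
  have : t <= (1 - q) * P k by rewrite ler_wpM2l ?subr_ge0 ?ltW.
  have := dissip k; rewrite -natr1 mulrDl mul1r; lra.
have [n nt] : exists n : nat, (P 0%N + a 0%N - m - e) / t < n%:R.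
  exists (Num.bound `|(P 0%N + a 0%N - m - e) / t|).
  exact: le_lt_trans (ler_norm _) (archi_boundP (normr_ge0 _)).
move: nt; rewrite ltr_pdivrMr //.
have := decay n; have := am n; have := Pe n; lra.
Qed.

(* Applied below to a = f, G = g and P k = s q^k ρ(w_k, y) along a descent
   sequence (w_k) with slope bounds s q^k. *)
Lemma descent_gap (R : realType) (a G P : nat -> R) (q m gy : R) : 0 < q < 1 ->
  (forall k, m <= a k) -> (forall k, 0 <= P k) -> (forall k, G k <= gy + P k) ->
  (forall k, q * G k + a k.+1 <= q * G k.+1 + a k) ->
  (forall k, P k.+1 + a k.+1 <= q * P k + a k) ->
  q * (G 0%N - gy) <= a 0%N - m.
Proof.
move=> /andP[q0 q1] am P0 GP Gstep Pstep.
have Gmono : {homo (fun k => q * G k - a k) : i j / (i <= j)%N >-> i <= j}.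
  apply: homo_leq => [x|y x z|k]; [exact: lexx|exact: le_trans|].
  by have := Gstep k; lra.
apply/ler_addgt0Pr => e e0; have [k Pk] := dissipation_ex_le q1 e0 am Pstep.
have /= := Gmono 0%N k (leq0n k).
have : q * G k <= q * (gy + P k) by apply: ler_wpM2l; [exact: ltW|exact: GP].
have : q * P k <= P k by rewrite ler_piMl // ltW.
have := am k; rewrite mulrDr; lra.
Qed.

Lemma ereal_inf_range_fin_num (R : realType) (T : Type) (h : T -> \bar R) :
  bounded_below h -> proper_ext h -> ereal_inf (range h) \is a fin_num.
Proof.
move=> [m hm] [x hx]; rewrite fin_numE; apply/andP; split.
  by rewrite gt_eqF // (lt_le_trans (ltNyr m)) //; apply/ereal_infP => _ [y _ <-].
by rewrite lt_eqF // (le_lt_trans _ hx) //; apply: ereal_inf_lbound; exists x.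
Qed.
Section MetricSpace.
Variables (R : realType) (M : Type) (rho : M -> M -> R).
Hypothesis rho_metric : is_metric rho.

Let rho_ge0 x y : 0 <= rho x y. Proof. by case: rho_metric. Qed.
Let rho_sym x y : rho x y = rho y x. Proof. by case: rho_metric => _ [_ []]. Qed.
Let rho_tri x y z : rho x z <= rho x y + rho y z.
Proof. by case: rho_metric => _ [_ [_]]. Qed.
Let rho_triM (c : R) x y z : 0 <= c -> c * rho x z <= c * rho x y + c * rho y z.
Proof. by move=> c0; rewrite -mulrDr ler_wpM2l. Qed.
Let rho_eq0 x y : rho x y = 0 <-> x = y. Proof. by case: rho_metric => _ []. Qed.
Let rho_xx x : rho x x = 0. Proof. exact/rho_eq0. Qed.
Let rho_gt0 x y : x <> y -> 0 < rho x y.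
Proof.
by move=> xy; rewrite lt_neqAle rho_ge0 andbT eq_sym; apply/eqP => /rho_eq0.
Qed.

Definition metric_cvg (u : nat -> M) (z : M) : Prop :=
  forall e : R, 0 < e -> exists N, forall n, (N <= n)%N -> rho (u n) z < e.

Definition metric_cauchy (u : nat -> M) : Prop :=
  forall e : R, 0 < e ->
    exists N, forall m n, (N <= m)%N -> (N <= n)%N -> rho (u m) (u n) < e.

Local Open Scope ereal_scope.

Section Slope.
Variable f : M -> \bar R.
Hypothesis f_ninfty : never_minfty f.

Lemma never_minfty_fin_num x : f x < +oo -> f x \is a fin_num.
Proof. by move=> fx; apply/fin_numP; split; [exact: f_ninfty | rewrite lt_eqF]. Qed.

Lemma global_slope_ge0 x : 0 <= global_slope rho f x.
Proof. by apply: ereal_sup_ubound; left. Qed.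

Lemma global_slope_leP x (s : R) : f x \is a fin_num -> (0 <= s)%R ->
  global_slope rho f x <= s%:E <-> forall v, f x <= f v + (s * rho x v)%:E.
Proof.
move=> fx s0; split=> [Hs v|Hv].
  have [->|vx] := pselect (v = x); first by rewrite rho_xx mulr0 adde0.
  have rxv : (0 < rho x v)%R by apply: rho_gt0 => /esym.
  have : pos_part (f x - f v) * ((rho x v)^-1)%:E <= s%:E.
    by apply: le_trans Hs; apply: ereal_sup_ubound; right; exists v.
  rewrite -(fineK fx); case Ev : (f v) => [b| |].
  - rewrite -EFinB /pos_part -EFin_max -EFinM -EFinD !lee_fin.
    by rewrite ler_pdivrMr // ge_max => /andP[_]; lra.
  - by rewrite addye ?leey.
  - by have := f_ninfty v; rewrite Ev.
apply: ge_ereal_sup => _ [->|[y yx <-]]; first by rewrite lee_fin.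
have rxy : (0 < rho x y)%R by apply: rho_gt0 => /esym.
have := Hv y; rewrite -(fineK fx); case Ey : (f y) => [b| |].
- rewrite -EFinB /pos_part -EFin_max -EFinM -EFinD !lee_fin => H.
  rewrite ler_pdivrMr // ge_max mulr_ge0 //=; lra.
- by rewrite /pos_part addeNy maxeNy mul0e lee_fin.
- by have := f_ninfty y; rewrite Ey.
Qed.

End Slope.

Section Ekeland.
Hypothesis rho_complete : metric_complete rho.
Variable f : M -> \bar R.
Hypotheses (f_ninfty : never_minfty f) (f_lsc : lsc rho f).
Hypothesis f_bounded : bounded_below f.

Section EkelandSet.
Variable mu : R.
Hypothesis mu_gt0 : (0 < mu)%R.

Definition ekeland_set (w : M) : set M :=
  [set v | f v + (mu * rho w v)%:E <= f w].

Lemma ekeland_set_refl w : ekeland_set w w.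
Proof. by rewrite /ekeland_set /= rho_xx mulr0 adde0. Qed.

Lemma ekeland_set_le w v : ekeland_set w v -> f v <= f w.
Proof. by apply: le_trans; rewrite leeDl // lee_fin mulr_ge0 // ltW. Qed.

Lemma ekeland_set_trans u v w :
  ekeland_set u v -> ekeland_set v w -> ekeland_set u w.
Proof.
move=> Suv Svw; apply: le_trans Suv; apply: le_trans (leeD2r _ Svw).
by rewrite -addeA -EFinD leeD2l // lee_fin addrC rho_triM ?ltW.
Qed.

Lemma ekeland_set_closed w u z n : metric_cvg u z ->
  (forall k, (n <= k)%N -> ekeland_set w (u k)) -> ekeland_set w z.
Proof.
move=> uz Su; rewrite /ekeland_set /=.
case Ew : (f w) => [b| |]; [|by rewrite leey|by have := f_ninfty w; rewrite Ew].
have -> : b%:E = (b - mu * rho w z)%:E + (mu * rho w z)%:E by rewrite -EFinD subrK.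
apply: leeD2r; apply/lee_addgt0Pr => e e0; rewrite -EFinD leNgt; apply/negP.
move=> /f_lsc[d [d0 Hd]].
have [|N HN] := uz (Num.min d (e / mu))%R; first by rewrite lt_min d0 divr_gt0.
have /HN : (N <= maxn n N)%N by rewrite leq_maxr.
rewrite lt_min => /andP[ukd]; rewrite ltr_pdivlMr // mulrC => uke.
have := Hd (u (maxn n N)); rewrite rho_sym => /(_ ukd).
have := Su (maxn n N) (leq_maxl _ _); rewrite /ekeland_set /= Ew.
case: (f (u _)) => [a| |] //; rewrite -EFinD !lte_fin lee_fin.
have := rho_triM w (u (maxn n N)) z (ltW mu_gt0); lra.
Qed.

Lemma ekeland_set_near_min w (e : R) : f w < +oo -> (0 < e)%R ->
  exists2 v, ekeland_set w v & forall u, ekeland_set w u -> f v <= f u + e%:E.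
Proof.
move=> fw e0; have [m fm] := f_bounded.
pose I := ereal_inf (f @` ekeland_set w).
have Ifin : I \is a fin_num.
  have Ile : I <= f w by apply: ereal_inf_lbound; exists w => //; exact: ekeland_set_refl.
  have Ige : m%:E <= I by apply/ereal_infP => _ [u _ <-].
  by rewrite fin_numE gt_eqF ?lt_eqF ?(le_lt_trans Ile) ?(lt_le_trans (ltNyr m)).
have [_ [v Sv <-] vI] := lb_ereal_inf_adherent e0 Ifin.
exists v => // u Su; apply/ltW/(lt_le_trans vI)/leeD2r.
by apply: ereal_inf_lbound; exists u.
Qed.

(* [w n.+1] almost minimizes [f] on [ekeland_set (w n)], which forces the
   nested sets [ekeland_set (w n.+1)] to have small diameter. *)
Lemma ekeland_sequence (e : nat -> R) x0 :
  (forall n, 0 < e n)%R -> f x0 < +oo ->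
  exists w : nat -> M, w 0%N = x0 /\
    {homo w : n p / (n <= p)%N >-> ekeland_set n p} /\
    forall n v, ekeland_set (w n.+1) v -> (mu * rho (w n.+1) v <= e n)%R.
Proof.
move=> e_gt0 fx0.
have [w [w0 Hw]] : exists w : nat -> M, w 0%N = x0 /\ forall n,
    f (w n) < +oo /\ ekeland_set (w n) (w n.+1) /\
    forall u, ekeland_set (w n) u -> f (w n.+1) <= f u + (e n)%:E.
  apply: (dependent_choice_nat (P := fun _ w => f w < +oo)
    (Q := fun n w v => ekeland_set w v /\
            forall u, ekeland_set w u -> f v <= f u + (e n)%:E)) => // n x fx.
  have [v Sv Hv] := ekeland_set_near_min fx (e_gt0 n).
  by exists v; split=> //; exact: le_lt_trans (ekeland_set_le Sv) fx.
exists w; split=> //; split.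
  apply: homo_leq => [|y x z|n]; first exact: ekeland_set_refl.
    exact: ekeland_set_trans.
  exact: (Hw n).2.1.
move=> n v Sv; have := (Hw n).2.2 v (ekeland_set_trans (Hw n).2.1 Sv).
have fv : f v \is a fin_num.
  apply: never_minfty_fin_num => //.
  exact: le_lt_trans (ekeland_set_le Sv) (Hw _).1.
by move/(le_trans Sv); rewrite leeD2lE // lee_fin.
Qed.

Theorem ekeland_variational x0 : f x0 < +oo ->
  exists2 z, ekeland_set x0 z & forall v, f z <= f v + (mu * rho z v)%:E.
Proof.
move=> fx0; pose e n := (n.+1%:R^-1 : R)%R.
have [n|w [w0 [wS diam]]] := @ekeland_sequence e x0 _ fx0; first by rewrite invr_gt0.
have e_small eps : (0 < eps)%R -> exists n, (2 * e n < mu * eps)%R.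
  move=> eps0; have /ltr_add_invr[n] : (0 < mu * eps / 2)%R by rewrite !mulr_gt0.
  by rewrite add0r => en; exists n; rewrite mulrC -ltr_pdivlMr.
have w_cauchy : metric_cauchy w.
  move=> eps /e_small[N HN]; exists N.+1 => p q Np Nq.
  rewrite -(ltr_pM2l mu_gt0).
  have := rho_triM (w p) (w N.+1) (w q) (ltW mu_gt0).
  rewrite [rho (w p) (w N.+1)]rho_sym.
  have := diam N _ (wS _ _ Np); have := diam N _ (wS _ _ Nq); lra.
have [z wz] : exists z, metric_cvg w z := rho_complete w_cauchy.
have zS n : ekeland_set (w n) z.
  by apply: (ekeland_set_closed wz (n := n)) => k; exact: wS.
exists z; first by rewrite -w0.
move=> v; have [Szv|nSzv] := pselect (ekeland_set z v); last first.
  by rewrite ltW // ltNge; apply/negP.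
suff -> : v = z by rewrite rho_xx mulr0 adde0.
apply/esym/rho_eq0/eqP; rewrite eq_le rho_ge0 andbT.
apply/ler_addgt0Pr => eps /e_small[n en]; rewrite add0r -(ler_pM2l mu_gt0).
have := rho_triM z (w n.+1) v (ltW mu_gt0); rewrite [rho z (w n.+1)]rho_sym.
have := diam n _ (zS n.+1); have := diam n _ (ekeland_set_trans (zS n.+1) Szv).
lra.
Qed.

Lemma ekeland_global_slope x0 : f x0 < +oo ->
  exists z, f z + (mu * rho x0 z)%:E <= f x0 /\ global_slope rho f z <= mu%:E.
Proof.
move=> fx0; have [z Sz Hz] := ekeland_variational fx0.
exists z; split=> //; apply/global_slope_leP => //; last exact: ltW.
exact: never_minfty_fin_num (le_lt_trans (ekeland_set_le Sz) fx0).
Qed.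

End EkelandSet.

Lemma slope_descent x (q s : R) : (0 < q)%R -> (0 < s)%R -> f x < +oo ->
    global_slope rho f x <= s%:E ->
  exists w : nat -> M, w 0%N = x /\ forall k,
    (f (w k) < +oo /\ global_slope rho f (w k) <= (s * q ^+ k)%:E) /\
    f (w k.+1) + (s * q ^+ k.+1 * rho (w k) (w k.+1))%:E <= f (w k).
Proof.
move=> q0 s0 fx sx.
apply: (dependent_choice_nat
  (P := fun k w => f w < +oo /\ global_slope rho f w <= (s * q ^+ k)%:E)
  (Q := fun k w v => f v + (s * q ^+ k.+1 * rho w v)%:E <= f w)).
  by rewrite expr0 mulr1.
move=> k w [fw _]; have sq0 : (0 < s * q ^+ k.+1)%R by rewrite mulr_gt0 ?exprn_gt0.
have [z [Hz sz]] := ekeland_global_slope sq0 fw.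
exists z; do !split => //; apply: le_lt_trans fw; apply: le_trans Hz.
by rewrite leeDl // lee_fin mulr_ge0 // ltW.
Qed.

Lemma dom_slope_dense x (d : R) : f x < +oo -> (0 < d)%R ->
  exists z, dom_slope rho f z /\ (rho x z < d)%R /\ f z <= f x.
Proof.
move=> fx d0; have [m fm] := f_bounded.
have fxfin := never_minfty_fin_num f_ninfty fx.
pose mu := ((fine (f x) - m + 1) / d)%R.
have fxm : (m <= fine (f x))%R by rewrite -lee_fin fineK.
have mu0 : (0 < mu)%R by rewrite divr_gt0 //; lra.
have [z [Hz sz]] := ekeland_global_slope mu0 fx.
have fzx : f z <= f x by apply: le_trans Hz; rewrite leeDl // lee_fin mulr_ge0 // ltW.
have fzfin : f z \is a fin_num := never_minfty_fin_num f_ninfty (le_lt_trans fzx fx).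
exists z; split.
  by split; [exact: le_lt_trans fzx fx | exact: le_lt_trans sz (ltry _)].
split=> //; rewrite -(ltr_pM2l mu0) [X in (_ < X)%R]divfK ?gt_eqF //.
move: Hz (fm z); rewrite -(fineK fxfin) -(fineK fzfin) -EFinD !lee_fin; lra.
Qed.

End Ekeland.

Section SlopeComparison.
Hypothesis rho_complete : metric_complete rho.
Variables (f g : M -> \bar R) (m : R).
Hypotheses (f_ninfty : never_minfty f) (g_ninfty : never_minfty g).
Hypotheses (f_lsc : lsc rho f) (g_lsc : lsc rho g).
Hypothesis f_ge : forall x, m%:E <= f x.
Hypothesis slope_gf : forall x, dom_slope rho f x ->
  dom g x /\ global_slope rho g x <= global_slope rho f x.
Hypothesis g_proper : proper_ext g.

Let f_bounded : bounded_below f. Proof. by exists m. Qed.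

Lemma dom_slope_gap_mul x y (q gy : R) : (0 < q < 1)%R -> dom_slope rho f x ->
  g y = gy%:E -> (q * (fine (g x) - gy) <= fine (f x) - m)%R.
Proof.
move=> q01 [fx sx] gyE; have /andP[q0 _] := q01.
have [s s0 xs] : exists2 s : R, (0 < s)%R & global_slope rho f x <= s%:E.
  move: sx (global_slope_ge0 f x); case: (global_slope rho f x) => // r _.
  by rewrite lee_fin => r0; exists (r + 1)%R; rewrite ?lee_fin; lra.
have [w [w0 Hw]] := slope_descent rho_complete f_ninfty f_lsc f_bounded q0 s0 fx xs.
have dw k : dom_slope rho f (w k).
  by split; [exact: (Hw k).1.1|exact: le_lt_trans (Hw k).1.2 (ltry _)].
have sk k : (0 <= s * q ^+ k)%R by rewrite mulr_ge0 ?exprn_ge0 ?ltW.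
have fw k : f (w k) \is a fin_num := never_minfty_fin_num f_ninfty (Hw k).1.1.
have gw k : g (w k) \is a fin_num := never_minfty_fin_num g_ninfty (slope_gf (dw k)).1.
have gslope k : forall v, g (w k) <= g v + (s * q ^+ k * rho (w k) v)%:E.
  apply/(global_slope_leP g_ninfty (gw k) (sk k)).
  apply: le_trans (slope_gf (dw k)).2 _.
  exact: (Hw k).1.2.
pose a k := fine (f (w k)); pose G k := fine (g (w k)).
pose t k := (s * q ^+ k)%R.
have tS k : t k.+1 = (q * t k)%R by rewrite /t exprS mulrCA.
have fstep k : (a k.+1 + q * (t k * rho (w k) (w k.+1)) <= a k)%R.
  have := (Hw k).2; rewrite -(fineK (fw k)) -(fineK (fw k.+1)) -EFinD lee_fin.
  by rewrite -/(t _) tS mulrA.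
have gstep k : (G k <= G k.+1 + t k * rho (w k) (w k.+1))%R.
  have := gslope k (w k.+1).
  by rewrite -(fineK (gw k)) -(fineK (gw k.+1)) -EFinD lee_fin.
rewrite -w0; apply: (@descent_gap _ a G (fun k => t k * rho (w k) y)%R) => // k.
- by rewrite -lee_fin fineK.
- exact: mulr_ge0 (sk k) (rho_ge0 _ _).
- by rewrite -lee_fin EFinD -gyE fineK //; exact: gslope.
- have : (q * G k <= q * (G k.+1 + t k * rho (w k) (w k.+1)))%R.
    by apply: ler_wpM2l; [exact: ltW|exact: gstep].
  have := fstep k; rewrite mulrDr; lra.
- have := rho_triM (w k.+1) (w k) y (sk k.+1).
  rewrite -/(t _) [rho (w k.+1) (w k)]rho_sym tS.
  have := fstep k; rewrite -!mulrA -mulrDr; lra.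
Qed.

Lemma dom_slope_gap x y : dom_slope rho f x -> g x <= g y + (f x - m%:E).
Proof.
move=> dx; have fx := never_minfty_fin_num f_ninfty dx.1.
have gx := never_minfty_fin_num g_ninfty (slope_gf dx).1.
case gyE : (g y) => [gy| |]; last by have := g_ninfty y; rewrite gyE.
  have fxm : (m <= fine (f x))%R by rewrite -lee_fin fineK.
  rewrite -(fineK fx) -(fineK gx) -EFinB -EFinD lee_fin -lerBlDl.
  by apply: ler_of_mul01 => [|r r01]; [lra|exact: dom_slope_gap_mul gyE].
by rewrite -(fineK fx) -EFinB addye ?leey.
Qed.

Lemma dom_gap x y : f x < +oo -> g x <= g y + (f x - m%:E).
Proof.
move=> fx; have fxfin := never_minfty_fin_num f_ninfty fx.
case gyE : (g y) => [gy| |]; last by have := g_ninfty y; rewrite gyE.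
  rewrite -(fineK fxfin) -EFinB -EFinD; apply/lee_addgt0Pr => r r0.
  rewrite -EFinD leNgt; apply/negP => /g_lsc[d [d0 Hd]].
  have [z [dz [xz fzx]]] :=
    dom_slope_dense rho_complete f_ninfty f_lsc f_bounded fx d0.
  have fzfin := never_minfty_fin_num f_ninfty dz.1.
  have := dom_slope_gap y dz; have := Hd z xz; rewrite gyE.
  move: fzx; rewrite -(fineK fzfin) -(fineK fxfin) lee_fin.
  case: (g z) => [gz| |] //; rewrite -EFinB -EFinD !lte_fin !lee_fin; lra.
by rewrite -(fineK fxfin) -EFinB addye ?leey.
Qed.

Lemma dom_gap_fin_num x : f x < +oo -> g x \is a fin_num.
Proof.
move=> fx; have [y gy] := g_proper; apply: (never_minfty_fin_num g_ninfty).
apply: le_lt_trans (dom_gap y fx) _.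
rewrite -(fineK (never_minfty_fin_num g_ninfty gy)).
by rewrite -(fineK (never_minfty_fin_num f_ninfty fx)) -EFinB -EFinD ltry.
Qed.

Lemma dom_gap_ereal_inf x : f x < +oo -> g x - (f x - m%:E) <= ereal_inf (range g).
Proof.
move=> fx; apply/ereal_infP => _ [y _ <-].
rewrite leeBlDr ?fin_numB ?never_minfty_fin_num //; exact: dom_gap.
Qed.

Lemma ereal_inf_range_fin_num_gap : proper_ext f ->
  ereal_inf (range g) \is a fin_num.
Proof.
move=> [x fx]; apply: ereal_inf_range_fin_num => //.
exists (fine (g x) - (fine (f x) - m))%R => y.
have := dom_gap y fx; rewrite -leeBlDr ?fin_numB ?never_minfty_fin_num //.
by rewrite -(fineK (dom_gap_fin_num fx)) -(fineK (never_minfty_fin_num f_ninfty fx)).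
Qed.

Lemma ereal_inf_range_gap x : g x - ereal_inf (range g) <= f x - m%:E.
Proof.
have [fx|] := ltP (f x) +oo; last first.
  by rewrite leye_eq => /eqP->; rewrite addye ?leey.
have Igfin := ereal_inf_range_fin_num_gap (ex_intro _ x fx).
rewrite leeBlDl // -leeBlDr ?fin_numB ?never_minfty_fin_num //.
exact: dom_gap_ereal_inf.
Qed.

End SlopeComparison.
End MetricSpace.

Unset Implicit Arguments.
Local Open Scope ereal_scope.

Theorem theorem3p3 (R : realType) (M : Type) (rho : M -> M -> R)
  (f g : M -> \bar R) :
  is_metric rho -> metric_complete rho ->
  never_minfty f -> never_minfty g ->
  proper_ext f -> proper_ext g ->
  lsc rho f -> lsc rho g ->
  bounded_below f ->
  (forall x, dom_slope rho f x ->
     dom g x /\ global_slope rho g x <= global_slope rho f x) ->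
  ereal_inf [set f x - g x | x in dom f] >= ereal_inf (range f) - ereal_inf (range g)
  /\ ereal_inf (range g) > -oo
  /\ (forall x, f x - ereal_inf (range f) >= g x - ereal_inf (range g)).
Proof.
move=> hm hc hf hg pf pg lf lg fb slope_gf.
have Iffin := ereal_inf_range_fin_num fb pf.
set If := ereal_inf (range f) in Iffin *; set Ig := ereal_inf (range g).
have fge x : (fine If)%:E <= f x.
  by rewrite fineK //; apply: ereal_inf_lbound; exists x.
have Igfin : Ig \is a fin_num :=
  ereal_inf_range_fin_num_gap hm hc hf hg lf lg fge slope_gf pg pf.
have gap x : g x - Ig <= f x - If.
  rewrite -(fineK Iffin).
  exact: (ereal_inf_range_gap hm hc hf hg lf lg fge slope_gf pg).
split; last by split; [rewrite -(fineK Igfin) ltNyr | exact: gap].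
apply/ereal_infP => _ [x fx <-]; move: (gap x).
have fxfin := never_minfty_fin_num hf fx.
have gxfin := dom_gap_fin_num hm hc hf hg lf lg fge slope_gf pg fx.
rewrite -(fineK Iffin) -(fineK Igfin) -(fineK fxfin) -(fineK gxfin).
by rewrite -!EFinB !lee_fin; lra.
Qed.
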